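(* Let $\Gamma=(N,A,u)$ be a game with $N=\{1,\dots,n\}$ and $A_i=A_j$ for all $i,j\in N$. Then $\Gamma$ is VNM symmetric if and only if for each transposition $\pi\in S_N$ we have $u_i(s_1,\dots,s_n)=u_{\pi(i)}(s_{\pi(1)},\dots,s_{\pi(n)})$ for all $i\in N$ and $(s_1,\dots,s_n)\in A$.
   Context: A (finite normal-form) game $\Gamma=(N,A,u)$ consists of a finite set $N$ of at least two players, a finite non-empty strategy set $A_i$ for each $i\in N$, $A=\times_{i\in N}A_i$, and utility functions $u_i:A\to\mathbb{R}$. $\Gamma$ is VNM symmetric if $A_i=A_j$ for all $i,j\in N$ and, for each permutation $\pi\in S_N$, $u_{\pi(i)}(s_1,\dots,s_n)=u_i(s_{\pi(1)},\dots,s_{\pi(n)})$ for all $i\in N$ and $(s_1,\dots,s_n)\in A$. *)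

From HB Require Import structures.
From mathcomp Require Import all_boot all_order all_algebra all_fingroup.
From mathcomp Require Import reals.
Set Implicit Arguments. Unset Strict Implicit. Unset Printing Implicit Defensive.

(* Players N = 'I_n (i.e. {0,...,n-1}, standing for {1,...,n}).
   Common strategy set A_i = S for all i, a finite type.
   A strategy profile is a finite function 'I_n -> S, i.e. an element of A. *)
Definition profile (n : nat) (S : finType) := {ffun 'I_n -> S}.

Definition perm_profile (n : nat) (S : finType) (pi : 'S_n) (s : profile n S)
  : profile n S := [ffun j => s (pi j)].

Definition VNM_symmetric (R : realType) (n : nat) (S : finType)
  (u : 'I_n -> profile n S -> R) : Prop :=
  forall (pi : 'S_n) (i : 'I_n) (s : profile n S),
    u (pi i) s = u i (perm_profile pi s).

Definition is_transposition (n : nat) (pi : 'S_n) : Prop :=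
  exists a b : 'I_n, a != b /\ pi = tperm a b.

From HB Require Import structures.
From mathcomp Require Import all_boot all_order all_algebra all_fingroup.
From mathcomp Require Import reals.

(* The permutations under which u is invariant contain the identity and are
   closed under composition, because permuting profiles is an action of 'S_n.
   Since 'S_n is generated by transpositions, invariance under every
   transposition is already invariance under every permutation. *)

Section PermProfile.

Variables (n : nat) (S : finType).

Lemma perm_profile1 (s : profile n S) : perm_profile 1 s = s.
Proof. by apply/ffunP => j; rewrite ffunE perm1. Qed.

Lemma perm_profileM (p q : 'S_n) (s : profile n S) :
  perm_profile (p * q) s = perm_profile p (perm_profile q s).
Proof. by apply/ffunP => j; rewrite !ffunE permM. Qed.

End PermProfile.

Section SymmetricUnder.

Variables (n : nat) (S : finType) (T : Type) (u : 'I_n -> profile n S -> T).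

Definition symmetric_under (p : 'S_n) : Prop :=
  forall (i : 'I_n) (s : profile n S), u (p i) s = u i (perm_profile p s).

Lemma symmetric_under1 : symmetric_under 1.
Proof. by move=> i s; rewrite perm1 perm_profile1. Qed.

Lemma symmetric_underM (p q : 'S_n) :
  symmetric_under p -> symmetric_under q -> symmetric_under (p * q).
Proof. by move=> up uq i s; rewrite permM uq up perm_profileM. Qed.

Lemma symmetric_under_tpermV (a b : 'I_n) :
  symmetric_under (tperm a b) <->
  (forall (i : 'I_n) (s : profile n S),
     u i s = u (tperm a b i) (perm_profile (tperm a b) s)).
Proof.
split=> ut i s; first by rewrite -ut tpermK.
by rewrite ut tpermK.
Qed.

Lemma symmetric_under_all_tperm :
  (forall a b : 'I_n, symmetric_under (tperm a b)) ->
  forall p : 'S_n, symmetric_under p.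
Proof.
move=> ut p; have [ts -> _] := prod_tpermP p.
by apply: (big_ind symmetric_under) => //; [exact: symmetric_under1 | exact: symmetric_underM].
Qed.

End SymmetricUnder.

Theorem mainTheorem17 (R : realType) (n : nat) (S : finType)
  (hn : (2 <= n)%N) (s0 : S) (u : 'I_n -> profile n S -> R) :
  VNM_symmetric u <->
  (forall pi : 'S_n, is_transposition pi ->
     forall (i : 'I_n) (s : profile n S),
       u i s = u (pi i) (perm_profile pi s)).
Proof.
(* [hn] and [s0] are unused: the equivalence holds for every n and S. *)
split=> [usym _ [a [b [_ ->]]] | ut].
  exact/symmetric_under_tpermV/usym.
apply: symmetric_under_all_tperm => a b.
have [<- | ab] := eqVneq a b; first by rewrite tperm1; exact: symmetric_under1.
by apply/symmetric_under_tpermV/ut; exists a, b.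
Qed.
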